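(* Let $p$ be an odd prime and $d$ a positive integer. Then $L(d+p^2)=L(d)+L(p^2+1)$.
   Context: For an odd prime $p$ and a positive integer $d$, define $$L(d)=\max_{1\le j\le p-1}\ \sum_{i=j}^{p-1}\left(\left\lfloor \frac{id}{p}\right\rfloor-\left\lfloor \frac{id}{p}-\left(1-\frac1p\right)\frac{jd}{p}\right\rfloor\right).$$ *)

From mathcomp Require Import all_boot all_order all_algebra.
Set Implicit Arguments. Unset Strict Implicit. Unset Printing Implicit Defensive.
Import Order.TTheory GRing.Theory Num.Theory.
Local Open Scope ring_scope.

(* Summand: floor(i d / p) - floor(i d / p - (1 - 1/p) j d / p).
   The second argument equals (i d p - (p-1) j d) / p^2, and intdiv's
   divz is the floor division for a positive divisor. *)
Definition Lterm (p d i j : nat) : int :=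
  ((i * d)%:Z %/ p%:Z)%Z
  - (((i * d * p)%:Z - ((p - 1) * j * d)%:Z) %/ (p ^ 2)%:Z)%Z.

Definition Lsum (p d j : nat) : int :=
  \sum_(j <= i < p) Lterm p d i j.

Definition L (p d : nat) : int :=
  \big[Num.max/Lsum p d 1]_(1 <= j < p) Lsum p d j.

From mathcomp Require Import all_boot all_order all_algebra.
From mathcomp Require Import zify.
Set Implicit Arguments. Unset Strict Implicit. Unset Printing Implicit Defensive.
Import Order.TTheory GRing.Theory Num.Theory.

(* Write F(x) = floor(x d / p^2).  The i-th summand of the j-th sum is
   F(i p) - F((i - j) p + j), so replacing d by d + p^2 adds x to F(x) and
   adds j (p - 1) (p - j) to the j-th sum, while for d = 1 every sum vanishes.
   The j-th sum increases up to j = (p - 1)/2 and decreases from j = (p + 1)/2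
   on, so its maximum sits at one of these two middle indices, where
   j (p - 1) (p - j) is maximal as well; hence the maxima simply add up.
   The monotonicity compares the columns c = j and c = j + 1 of the values
   F(k p + c): if p does not divide d, then k |-> k d mod p permutes the
   residues and each full column sums to floor(c d / p) + sum_k floor(k d / p);
   if d = p e, then F(k p + c) = k e + floor(c e / p) is explicit. *)

Definition fl (p d x : nat) : nat := x * d %/ p ^ 2.

Lemma fl_mulp p d j : 0 < p -> fl p d (j * p) = j * d %/ p.
Proof. by move=> p_gt0; rewrite /fl expnS expn1 mulnAC divnMr. Qed.

Lemma fl_homo p d : {homo fl p d : x y / x <= y}.
Proof. by move=> x y le_xy; rewrite /fl leq_div2r // leq_mul2r le_xy orbT. Qed.

Lemma fl_shift p d x : 0 < p -> fl p (d + p ^ 2) x = fl p d x + x.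
Proof. by move=> p_gt0; rewrite /fl mulnDr divnDMl // expn_gt0 p_gt0. Qed.

Lemma Lterm_flE p d i j : 0 < p -> j <= i ->
  Lterm p d i j = (Posz (fl p d (i * p)) - Posz (fl p d ((i - j) * p + j)))%R.
Proof.
move=> p_gt0 le_ji.
have eq_num : i * d * p - (p - 1) * j * d = ((i - j) * p + j) * d.
  have [k ->] : exists k, i = j + k by exists (i - j); rewrite subnKC.
  by rewrite addKn; nia.
rewrite /Lterm subzn; last by rewrite [i * d * p]mulnAC leq_mul // mulnC leq_mul ?leq_subr.
by rewrite eq_num !divz_nat fl_mulp.
Qed.

Definition Lplus p d j := \sum_(j <= i < p) fl p d (i * p).
Definition Lminus p d j := \sum_(0 <= k < p - j) fl p d (k * p + j).

Lemma Posz_sum m n (G : nat -> nat) :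
  Posz (\sum_(m <= i < n) G i) = (\sum_(m <= i < n) Posz (G i))%R.
Proof. exact: (big_morph Posz PoszD (erefl _)). Qed.

Lemma Lsum_split p d j : 0 < p ->
  Lsum p d j = (Posz (Lplus p d j) - Posz (Lminus p d j))%R.
Proof.
move=> p_gt0; rewrite /Lsum (eq_big_nat _ _ (F2 := fun i =>
  (Posz (fl p d (i * p)) - Posz (fl p d ((i - j) * p + j)))%R)); last first.
  by move=> i /andP[le_ji _]; apply: Lterm_flE.
rewrite sumrB !Posz_sum; congr (_ - _)%R.
by rewrite -{1}(add0n j) big_addn; apply: eq_bigr => k _; rewrite addnK.
Qed.

Lemma Lsum_diffE p d j : 0 < p -> Lsum p d j =
  (\sum_(0 <= k < p - j) (Posz (fl p d ((k + j) * p)) - Posz (fl p d (k * p + j))))%R.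
Proof.
move=> p_gt0; rewrite Lsum_split // sumrB -!Posz_sum /Lplus /Lminus.
by rewrite -{1}(add0n j) big_addn.
Qed.

Lemma Lsum_shift p d j : 0 < p ->
  Lsum p (d + p ^ 2) j = (Lsum p d j + Posz (j * (p - 1) * (p - j)))%R.
Proof.
move=> p_gt0; rewrite !Lsum_diffE // PoszM -[Posz (p - j)]natz mulr_natr.
rewrite -[X in (_ *+ X)%R]subn0 -sumr_const_nat -big_split /=.
apply: eq_bigr => k _; rewrite !fl_shift // !PoszD.
have -> : (k + j) * p = k * p + j + j * (p - 1) by rewrite mulnBr muln1; nia.
by rewrite PoszD; lia.
Qed.

Lemma Lsum1 p j : 0 < p -> Lsum p 1 j = 0%R.
Proof.
move=> p_gt0; rewrite Lsum_diffE //; apply: big1_seq => k.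
rewrite mem_index_iota => /andP[_ lt_kpj].
by rewrite /fl !muln1 !divn_small ?subrr // expnS expn1; nia.
Qed.

Lemma sum_divn_shift p m : 0 < p -> \sum_(0 <= r < p) (r + m) %/ p = m.
Proof.
move=> p_gt0; elim: m => [|m IHm].
  by apply: big1_seq => r; rewrite mem_index_iota addn0 => /andP[_ lt_rp]; rewrite divn_small.
have shiftS : \sum_(0 <= r < p) (r + m.+1) %/ p = \sum_(0 <= r < p) (r.+1 + m) %/ p.
  by apply: eq_bigr => r _; rewrite addnS.
have rec := @big_nat_recl _ 0 addn p 0 (fun r => (r + m) %/ p) (leq0n p).
rewrite (@big_nat_recr _ 0 addn p 0 (fun r => (r + m) %/ p) (leq0n p)) /= IHm add0n in rec.
rewrite addnC -{1}(mul1n p) divnMDl // in rec.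
rewrite shiftS; lia.
Qed.

Lemma sum_mulmod_perm p d (G : nat -> nat) : 0 < p -> coprime p d ->
  \sum_(0 <= k < p) G (k * d %% p) = \sum_(0 <= k < p) G k.
Proof.
move=> p_gt0 co_pd; rewrite !big_mkord.
pose h (k : 'I_p) : 'I_p := Ordinal (ltn_pmod (k * d) p_gt0).
suff h_inj : injective h by rewrite [RHS](reindex_inj h_inj).
move=> x y /(congr1 val) /= eq_xy; apply: val_inj => /=.
wlog le_xy : x y eq_xy / x <= y.
  by move=> W; case/orP: (leq_total x y) => [/W|/W ->] //; apply.
have : p %| (y - x) * d by rewrite mulnBl -eqn_mod_dvd ?leq_mul2r ?le_xy ?orbT // eq_xy.
rewrite Gauss_dvdl // /dvdn modn_small; first lia.
by have := ltn_ord y; lia.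
Qed.

Lemma sum_fl_row p d c : 0 < p -> coprime p d ->
  \sum_(0 <= k < p) fl p d (k * p + c) = c * d %/ p + \sum_(0 <= k < p) k * d %/ p.
Proof.
move=> p_gt0 co_pd.
have split_fl k : fl p d (k * p + c) = k * d %/ p + (k * d %% p + c * d %/ p) %/ p.
  rewrite /fl expnS expn1 divnMA mulnDl mulnAC divnMDl //.
  by rewrite {1}(divn_eq (k * d) p) -addnA divnMDl.
rewrite (eq_bigr _ (fun k _ => split_fl k)) big_split /= addnC.
by rewrite (sum_mulmod_perm (fun r => (r + c * d %/ p) %/ p) p_gt0 co_pd) sum_divn_shift.
Qed.

Lemma fl_step_coprime p d j : 0 < p -> coprime p d -> j.+1 <= p - j.+1 ->
  fl p d (j * p) + Lminus p d j.+1
  <= fl p d ((p - j.+1) * p + j) + \sum_(0 <= k < p - j.+1) fl p d (k * p + j).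
Proof.
move=> p_gt0 co_pd le_jP; set P := p - j.+1 in le_jP *.
have le_Pp : P <= p by rewrite /P leq_subr.
have row1 := sum_fl_row j.+1 p_gt0 co_pd; have row0 := sum_fl_row j p_gt0 co_pd.
rewrite (big_cat_nat (leq0n P) le_Pp) /= in row1.
rewrite (big_cat_nat (leq0n P) le_Pp) /= in row0.
have tail_le : \sum_(P <= k < p) fl p d (k * p + j) <= \sum_(P <= k < p) fl p d (k * p + j.+1).
  by apply: leq_sum => k _; apply: fl_homo; rewrite addnS.
have head_le : fl p d (j.+1 * p) <= fl p d (P * p + j).
  by apply: fl_homo; rewrite (leq_trans _ (leq_addr _ _)) // leq_mul2r le_jP orbT.
rewrite !fl_mulp // in head_le *; rewrite /Lminus -/P.
lia.
Qed.

Lemma divn_step_small P j p s : j.+1 < P -> P + j.+1 = p -> s < p ->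
  j * s + P * (j.+1 * s %/ p) <= P * s + P.+1 * (j * s %/ p).
Proof.
move=> lt_jP def_p lt_sp; have p_gt0 : 0 < p by rewrite -def_p addnS.
have a_lo := leq_divM (j * s) p; have a_hi := ltn_ceil (j * s) p_gt0.
have b_lo := leq_divM (j.+1 * s) p; have b_hi := ltn_ceil (j.+1 * s) p_gt0.
move: (j * s %/ p) (j.+1 * s %/ p) a_lo a_hi b_lo b_hi => a b a_lo a_hi b_lo b_hi.
have b_le : b <= a.+1 by nia.
case: (leqP b a) => [le_ba|lt_ab]; first by nia.
have -> : b = a.+1 by lia.
(* [(j+1) s / p] can only pass [j s / p] when [s] is large compared to [a]. *)
have s_ge : 2 * a + 3 <= s by nia.
have js_ge : j * (2 * a + 3) <= j * s by rewrite leq_mul2l s_ge orbT.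
have ja_le : j * (a + 2) <= P * (a + 1) + a by nia.
have : (P - j) * (a + 2) <= (P - j) * s by rewrite leq_mul2l; apply/orP; right; lia.
nia.
Qed.

Lemma divn_step P j p e : j.+1 < P -> P + j.+1 = p ->
  j * e + P * (j.+1 * e %/ p) <= P * e + P.+1 * (j * e %/ p).
Proof.
move=> lt_jP def_p; have p_gt0 : 0 < p by rewrite -def_p addnS.
have := divn_step_small lt_jP def_p (ltn_pmod e p_gt0).
set q := e %/ p; set s := e %% p.
rewrite (divn_eq e p) -/q -/s !mulnDr !mulnA !divnMDl //.
have : q * (j * p + P) <= q * (P * p + j).
  by rewrite leq_mul2l -def_p; apply/orP; right; nia.
clearbody q s; lia.
Qed.

Lemma fl_dvd p e x : 0 < p -> fl p (p * e) x = x * e %/ p.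
Proof. by move=> p_gt0; rewrite /fl expnS expn1 mulnCA mulnC divnMr. Qed.

Lemma fl_step_dvd p e j : 2 * j + 3 <= p ->
  fl p (p * e) (j * p) + Lminus p (p * e) j.+1
  <= fl p (p * e) ((p - j.+1) * p + j) + \sum_(0 <= k < p - j.+1) fl p (p * e) (k * p + j).
Proof.
move=> le_jp; have p_gt0 : 0 < p by lia.
set P := p - j.+1; have lt_jP : j.+1 < P by rewrite /P; lia.
have def_p : P + j.+1 = p by rewrite /P subnK //; lia.
have fl_row c : \sum_(0 <= k < P) fl p (p * e) (k * p + c)
    = \sum_(0 <= k < P) k * e + P * (c * e %/ p).
  rewrite -[X in X * (_ %/ _)](subn0 P) -sum_nat_const_nat -big_split /=.
  by apply: eq_bigr => k _; rewrite fl_dvd // mulnDl mulnAC divnMDl.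
rewrite /Lminus -/P !fl_row !fl_dvd // mulnAC mulnK // mulnDl mulnAC divnMDl //.
have := divn_step e lt_jP def_p; lia.
Qed.

Lemma fl_step p d j : prime p -> 2 * j + 3 <= p ->
  fl p d (j * p) + Lminus p d j.+1
  <= fl p d ((p - j.+1) * p + j) + \sum_(0 <= k < p - j.+1) fl p d (k * p + j).
Proof.
move=> p_pr le_jp; have [/dvdnP[e ->]|ndvd_pd] := boolP (p %| d).
  by rewrite mulnC; apply: fl_step_dvd.
by apply: fl_step_coprime; rewrite ?prime_gt0 ?prime_coprime //; lia.
Qed.

Lemma Lsum_succ p d j : 0 < p -> j < p ->
  (Lsum p d j + Posz (fl p d ((p - j.+1) * p + j) + \sum_(0 <= k < p - j.+1) fl p d (k * p + j)))%R
  = (Lsum p d j.+1 + Posz (fl p d (j * p) + Lminus p d j.+1))%R.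
Proof.
move=> p_gt0 lt_jp; rewrite !Lsum_split //.
rewrite [Lplus p d j](big_ltn lt_jp) [Lminus p d j]/Lminus -subnSK // big_nat_recr //=.
rewrite -/(Lplus p d j.+1); lia.
Qed.

Lemma Lsum_le_succ p d j : prime p -> 2 * j + 3 <= p -> (Lsum p d j <= Lsum p d j.+1)%R.
Proof.
move=> p_pr le_jp; have lt_jp : j < p by lia.
have := Lsum_succ d (prime_gt0 p_pr) lt_jp.
have := fl_step d p_pr le_jp; lia.
Qed.

Lemma Lsum_succ_le p d j : p <= 2 * j -> j.+1 < p -> (Lsum p d j.+1 <= Lsum p d j)%R.
Proof.
move=> le_pj lt_j1p; have p_gt0 : 0 < p by lia.
have := Lsum_succ d p_gt0 (ltnW lt_j1p).
have : \sum_(0 <= k < p - j.+1) fl p d (k * p + j) <= Lminus p d j.+1.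
  by apply: leq_sum => k _; apply: fl_homo; rewrite addnS.
have : fl p d ((p - j.+1) * p + j) <= fl p d (j * p).
  by apply: fl_homo; nia.
lia.
Qed.

Lemma Lsum_le_half p d j : prime p -> odd p -> 0 < j <= p./2 -> (Lsum p d j <= Lsum p d p./2)%R.
Proof.
move=> p_pr p_odd /andP[j_gt0 le_jh].
have halfp := odd_halfK p_odd.
rewrite -(subnK le_jh); have : p./2 - j + j <= p./2 by rewrite subnK.
elim: (p./2 - j) => [|n IHn] le_nh //.
apply: le_trans (IHn _) (Lsum_le_succ d p_pr _); lia.
Qed.

Lemma Lsum_le_half_succ p d j : prime p -> odd p -> p./2 < j < p ->
  (Lsum p d j <= Lsum p d p./2.+1)%R.
Proof.
move=> p_pr p_odd /andP[lt_hj lt_jp].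
have halfp := odd_halfK p_odd.
rewrite -(subnK lt_hj); have : j - p./2.+1 + p./2.+1 < p by rewrite subnK.
elim: (j - p./2.+1) => [|n IHn] lt_np //.
apply: le_trans (Lsum_succ_le d _ _) (IHn _); lia.
Qed.

Lemma Lsum_argmax p d : prime p -> odd p -> exists j0,
  p./2 <= j0 <= p./2.+1 /\ forall j, 0 < j < p -> (Lsum p d j <= Lsum p d j0)%R.
Proof.
move=> p_pr p_odd.
have [le_mid|lt_mid] := lerP (Lsum p d p./2) (Lsum p d p./2.+1).
- exists p./2.+1; split=> [|j /andP[j_gt0 lt_jp]]; first by rewrite leqnSn leqnn.
  have [le_jh|lt_hj] := leqP j p./2; last by apply: Lsum_le_half_succ => //; rewrite lt_hj.
  by apply: le_trans le_mid; apply: Lsum_le_half => //; rewrite j_gt0.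
- exists p./2; split=> [|j /andP[j_gt0 lt_jp]]; first by rewrite leqnn leqnSn.
  have [le_jh|lt_hj] := leqP j p./2; first by apply: Lsum_le_half => //; rewrite j_gt0.
  by apply/ltW/le_lt_trans/lt_mid; apply: Lsum_le_half_succ => //; rewrite lt_hj.
Qed.

Lemma L_eq_Lsum p d j0 : 0 < j0 < p ->
  (forall j, 0 < j < p -> (Lsum p d j <= Lsum p d j0)%R) -> L p d = Lsum p d j0.
Proof.
move=> j0_range Lsum_max; apply/le_anti/andP; split.
  rewrite /L big_seq; apply: bigmax_le => [|j]; last by rewrite mem_index_iota; apply: Lsum_max.
  by apply: Lsum_max; case/andP: j0_range => j0_gt0; apply: leq_ltn_trans.
by rewrite /L; apply: le_bigmax_seq; rewrite // mem_index_iota.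
Qed.

Lemma mul_sub_le_mid p j j0 : odd p -> p./2 <= j0 <= p./2.+1 -> j < p ->
  j * (p - j) <= j0 * (p - j0).
Proof.
move=> p_odd j0_mid lt_jp.
have [h p_eq] : exists h, p = h.*2.+1 by exists p./2; rewrite -[LHS]odd_double_half p_odd add1n.
subst p; move: j0_mid; rewrite /= uphalf_double => /andP[le_hj0 le_j0h].
have -> : j0 * (h.*2.+1 - j0) = h * h.+1.
  have [->|->] : j0 = h \/ j0 = h.+1 by lia.
    by rewrite -addnn -addSn addnK.
  by rewrite -addnn subSS addKn mulnC.
by have [le_jh|lt_hj] := leqP j h; nia.
Qed.

Theorem mainTheorem3 (p d : nat) :
  prime p -> odd p -> (0 < d)%N ->
  L p (d + p ^ 2) = (L p d + L p (p ^ 2 + 1))%R.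
Proof.
move=> p_pr p_odd _; have p_gt1 := prime_gt1 p_pr; have p_gt0 := ltnW p_gt1.
have [j0 [j0_mid Lsum_max]] := Lsum_argmax d p_pr p_odd.
have j0_range : 0 < j0 < p by have := odd_halfK p_odd; lia.
have weight_max j : 0 < j < p -> (Posz (j * (p - 1) * (p - j)) <= Posz (j0 * (p - 1) * (p - j0)))%R.
  case/andP=> _ lt_jp; rewrite lez_nat mulnAC [j0 * _ * _]mulnAC leq_mul2r.
  by rewrite mul_sub_le_mid ?orbT.
have Lsum_shift_max j : 0 < j < p -> (Lsum p (d + p ^ 2) j <= Lsum p (d + p ^ 2) j0)%R.
  by move=> j_range; rewrite !Lsum_shift // lerD ?Lsum_max ?weight_max.
have Lsum1_max j : 0 < j < p -> (Lsum p (1 + p ^ 2) j <= Lsum p (1 + p ^ 2) j0)%R.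
  by move=> j_range; rewrite !Lsum_shift // !Lsum1 // !add0r weight_max.
rewrite [p ^ 2 + 1]addnC !(L_eq_Lsum j0_range) //.
by rewrite !Lsum_shift // Lsum1 // add0r.
Qed.
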